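(* Suppose $|X|\ge3$. If a random choice rule $p$ on $X$ is consistent with the persistent craving model, then $p$ does not satisfy regularity, i.e. there exist $x\in A\subseteq B\subseteq X$ with $p(x,A)<p(x,B)$.
   Context: $X$ is a finite set, $\mathcal{X}$ its nonempty subsets, $\mathcal{L}(X)$ its linear orders, $M(\succ,A)$ the $\succ$-maximal element of $A$, $N(x,A)=\{\succ: x\succ y\ \forall y\in A\setminus\{x\}\}$. A random choice rule is $p:X\times\mathcal{X}\to[0,1]$ with $p(x,A)\ge0$ and $\sum_{x\in A}p(x,A)=1$. Given a linear order $\rhd$, the craving preferences $\{\succ_x\}_{x\in X}$ are defined by: $x\succ_x y$ for all $y\ne x$, and for $y,z\ne x$, $y\succ_x z$ iff $y\rhd z$. A distribution $\nu\in\Delta(\mathcal{L}(X))$ supported on $\{\succ_x\}_{x\in X}$ is craving monotonic w.r.t. $\rhd$ if $x\rhd y$ implies $\nu(\succ_x)>\nu(\succ_y)>0$. A persistence function is $\phi:X^2\to[0,1)$ with $\phi(x,x)=0$ and $\phi(x,y)>0$ for $x\ne y$. The transition function $t:X\times\mathcal{L}(X)\to\Delta(\mathcal{L}(X))$ has a persistent craving representation $(\rhd,\nu,\phi)$ if $t(x,\succ_y)=\phi(x,y)\delta_{\succ_y}+(1-\phi(x,y))\nu$ for all $x,y$, and $t(x,\succ)=\nu$ for every $\succ$ outside the support of $\nu$ ($\delta_{\succ}$ is the point mass). For each $A\in\mathcal{X}$, $\nu_A$ is the (unique) stationary distribution of the Markov chain on $\mathcal{L}(X)$ with transition probabilities $m_A(\succ,\succ')=t_{\succ'}(M(\succ,A),\succ)$.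 $p$ is consistent with the persistent craving model if there is such a $t$ (with some $\rhd$, craving monotonic $\nu$, persistence function $\phi$) with $p(x,A)=\sum_{\succ\in N(x,A)}\nu_A(\succ)$ for all $x\in A\in\mathcal{X}$. *)

From HB Require Import structures.
From mathcomp Require Import all_boot all_order all_algebra.
From mathcomp Require Import reals.
Set Implicit Arguments. Unset Strict Implicit. Unset Printing Implicit Defensive.
Import Order.TTheory GRing.Theory Num.Theory.
Local Open Scope ring_scope.

Section PC.
Variable X : finType.
Variable R : realType.

Definition is_linord (r : {ffun X * X -> bool}) : bool :=
  [forall a, ~~ r (a, a)] &&
  [forall a, forall b, forall c, r (a, b) && r (b, c) ==> r (a, c)] &&
  [forall a, forall b, (a != b) ==> r (a, b) || r (b, a)].

Definition linord := {r : {ffun X * X -> bool} | is_linord r}.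

(* lt o a b  means  a ≻ b  in the order o *)
Definition lt (o : linord) (a b : X) : bool := val o (a, b).

Definition Nset (x : X) (A : {set X}) : {set linord} :=
  [set o | [forall y in A, (y != x) ==> lt o x y]].

Definition Mel (o : linord) (A : {set X}) : option X :=
  [pick x in A | [forall y in A, (y != x) ==> lt o x y]].

Definition is_crave (rhd : linord) (x : X) (o : linord) : bool :=
  [forall a, forall b,
     lt o a b == (a != b) && ((a == x) || ((b != x) && lt rhd a b))].

Definition random_choice_rule (p : X -> {set X} -> R) : Prop :=
  forall A : {set X}, A != set0 ->
    (forall x, 0 <= p x A <= 1) /\ \sum_(x in A) p x A = 1.

Definition is_dist (T : finType) (d : T -> R) : Prop :=
  (forall t, 0 <= d t) /\ \sum_t d t = 1.

Definition craving_monotonic (rhd : linord) (nu : linord -> R) : Prop :=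
  is_dist nu /\
  (forall o, nu o != 0 -> exists x, is_crave rhd x o) /\
  (forall x y ox oy, is_crave rhd x ox -> is_crave rhd y oy ->
     lt rhd x y -> nu ox > nu oy /\ nu oy > 0).

Definition persistence (phi : X -> X -> R) : Prop :=
  forall x y, 0 <= phi x y < 1 /\ (phi x x = 0) /\ (x != y -> phi x y > 0).

(* t x o o' = probability that t(x, o) assigns to o'. *)
Definition persistent_craving_rep (t : X -> linord -> linord -> R)
    (rhd : linord) (nu : linord -> R) (phi : X -> X -> R) : Prop :=
  craving_monotonic rhd nu /\ persistence phi /\
  (forall x y oy, is_crave rhd y oy ->
     forall o', t x oy o' = phi x y * (o' == oy)%:R + (1 - phi x y) * nu o') /\
  (forall x o, nu o = 0 -> forall o', t x o o' = nu o').

Definition mchain (t : X -> linord -> linord -> R) (A : {set X})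
    (o o' : linord) : R :=
  match Mel o A with Some x => t x o o' | None => 0 end.

Definition stationary (t : X -> linord -> linord -> R) (A : {set X})
    (nuA : linord -> R) : Prop :=
  is_dist nuA /\ forall o', nuA o' = \sum_o nuA o * mchain t A o o'.

Definition consistent_PC (p : X -> {set X} -> R) : Prop :=
  exists t rhd nu phi,
    persistent_craving_rep t rhd nu phi /\
    forall A : {set X}, A != set0 ->
      exists nuA, stationary t A nuA /\
        forall x, x \in A -> p x A = \sum_(o in Nset x A) nuA o.

End PC.

From HB Require Import structures.
From mathcomp Require Import all_boot all_order all_algebra.
From mathcomp Require Import reals lra.
Set Implicit Arguments. Unset Strict Implicit. Unset Printing Implicit Defensive.
Import Order.TTheory GRing.Theory Num.Theory.
Local Open Scope ring_scope.

(* Pick x below y in rhd and a third item z.  Among craving preferences only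
   [≻_x] chooses x from {x, y}, so p(x, {x, y}) is the stationary mass of
   [≻_x] for that menu.  From the full menu the craved item itself is chosen,
   whose persistence is 0, so the chain restarts from nu at every step: its
   stationary law is nu and p(x, X) >= nu(≻_x).  On {x, y}, no state moves to
   [≻_x] with probability above nu(≻_x), while from [≻_z], which carries
   positive stationary mass, the chosen item differs from z and persists with
   positive probability; hence the stationary mass of [≻_x] on {x, y} is
   strictly below nu(≻_x). *)

Section LinearOrders.
Variable X : finType.
Implicit Types (o rhd : linord X) (a b w : X) (A : {set X}).

Lemma linord_irr o a : lt o a a = false.
Proof. by move: (valP o) => /andP[/andP[/forallP irr _] _]; apply/negbTE/irr. Qed.

Lemma linord_trans o : transitive (lt o).
Proof.
move: (valP o) => /andP[/andP[_ /forallP tr] _] b a c ab bc.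
by have /forallP/(_ b)/forallP/(_ c)/implyP := tr a; apply; apply/andP.
Qed.

Lemma linord_total o a b : a != b -> lt o a b || lt o b a.
Proof.
by move: (valP o) => /andP[_ /forallP tot]; have /forallP/(_ b)/implyP := tot a.
Qed.

Lemma linord_asym o a b : lt o a b -> lt o b a = false.
Proof. by move=> ab; apply/negbTE/negP => /(linord_trans ab); rewrite linord_irr. Qed.

Lemma Mel_in o A a : Mel o A = Some a -> a \in A.
Proof. by rewrite /Mel; case: pickP => // a' /andP[a'A _] [<-]. Qed.

Lemma Mel_top o A a :
  a \in A -> (forall b, b \in A -> b != a -> lt o a b) -> Mel o A = Some a.
Proof.
move=> aA a_top; rewrite /Mel; case: pickP => [a' /andP[a'A /forallP a'_top]|].
  case: (eqVneq a' a) => [-> //|a'a].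
  by have := a'_top a; rewrite aA eq_sym a'a (linord_asym (a_top _ a'A a'a)).
move/(_ a); rewrite aA /= => /negP[]; apply/forall_inP => b bA; apply/implyP.
exact: a_top.
Qed.

(* The element of A strictly above the largest number of others is the top. *)
Lemma Mel_some o A : A != set0 -> exists a, Mel o A = Some a.
Proof.
case/set0Pn => a0 a0A; pose above a := #|[set b in A | lt o a b]|.
case: (arg_maxnP above a0A) => a aA a_max; exists a; apply: Mel_top => // b bA ba.
have /orP[b_a|//] := linord_total o ba.
suff: (above a < above b)%N by rewrite ltnNge (a_max b bA : (above b <= above a)%N).
apply/proper_card/properP; split.
  by apply/subsetP => c; rewrite !inE => /andP[-> /(linord_trans b_a)].
by exists a; rewrite !inE ?linord_irr ?andbF // b_a andbT.
Qed.

Definition crave_lt rhd w a b := (a != b) && ((a == w) || (b != w) && lt rhd a b).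

Definition crave_rel rhd w : {ffun X * X -> bool} :=
  [ffun ab => crave_lt rhd w ab.1 ab.2].

Lemma crave_rel_linord rhd w : is_linord (crave_rel rhd w).
Proof.
apply/andP; split; first (apply/andP; split).
- by apply/forallP => a; rewrite ffunE /crave_lt /= eqxx.
- apply/forallP => a; apply/forallP => b; apply/forallP => c; apply/implyP.
  rewrite !ffunE /crave_lt /=.
  move=> /andP[/andP[ab /orP[/eqP aw|/andP[bw ab']]] /andP[bc bc']].
    rewrite aw eqxx /= andbT; apply: contraNneq ab => wc.
    by move: bc'; rewrite -wc eqxx /= orbF aw eq_sym.
  move: bc'; rewrite (negbTE bw) /= => /andP[cw bc'].
  have ac := linord_trans ab' bc'.
  by rewrite cw ac orbT andbT; apply: contraTneq ac => ->; rewrite linord_irr.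
- apply/forallP => a; apply/forallP => b; apply/implyP => ab.
  rewrite !ffunE /crave_lt /= [b == a]eq_sym ab /=.
  have [//|aw] := eqVneq a w; have [//|bw] := eqVneq b w.
  by rewrite linord_total.
Qed.

Definition crave rhd w : linord X :=
  exist _ (crave_rel rhd w) (crave_rel_linord rhd w).

Lemma lt_crave rhd w a b :
  lt (crave rhd w) a b = (a != b) && ((a == w) || (b != w) && lt rhd a b).
Proof. by rewrite /lt /= ffunE. Qed.

Lemma is_crave_crave rhd w : is_crave rhd w (crave rhd w).
Proof. by apply/forallP => a; apply/forallP => b; rewrite lt_crave. Qed.

Lemma is_craveE rhd w o : is_crave rhd w o -> o = crave rhd w.
Proof.
move=> /forallP cr; apply: val_inj; apply/ffunP => -[a b].
by have /forallP/(_ b)/eqP := cr a; rewrite -lt_crave.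
Qed.

Lemma crave_inj rhd : injective (crave rhd).
Proof.
move=> a b eq_ab; apply/eqP/negPn/negP => ab.
by have := lt_crave rhd a a b; rewrite eq_ab lt_crave (negbTE ab) !eqxx.
Qed.

Lemma crave_top rhd w a : a != w -> lt (crave rhd w) w a.
Proof. by move=> aw; rewrite lt_crave eqxx eq_sym aw. Qed.

Lemma lt_crave_inv rhd w a b : lt (crave rhd w) a b -> lt rhd b a -> a = w.
Proof.
by rewrite lt_crave => /andP[_ /orP[/eqP //|/andP[_ /linord_asym ->]]].
Qed.

Lemma Mel_crave rhd w A : w \in A -> Mel (crave rhd w) A = Some w.
Proof. by move=> wA; apply: Mel_top => // a _; apply: crave_top. Qed.

Lemma crave_Nset rhd x A : crave rhd x \in Nset x A.
Proof. by rewrite inE; apply/forall_inP => a _; apply/implyP; apply: crave_top. Qed.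

Variant crave_spec rhd o : Prop :=
  | IsCrave w of o = crave rhd w
  | NotCrave of forall w, o != crave rhd w.

Lemma craveP rhd o : crave_spec rhd o.
Proof.
case: (pickP (fun w => o == crave rhd w)) => [w /eqP|not_crave]; first exact: IsCrave.
by apply: NotCrave => w; rewrite not_crave.
Qed.

Lemma linord_triple rhd :
  (2 < #|X|)%N -> exists x y z, [/\ lt rhd y x, z != x & z != y].
Proof.
move: (enum_uniq (pred_of_simpl (@predT X))); rewrite cardE.
case: (enum _) => [|a [|b [|c s]]] //= + _; rewrite !inE !negb_or.
move=> /andP[/and3P[ab ac _] /andP[/andP[bc _] _]].
have [ab'|ba'] := orP (linord_total rhd ab).
  by exists b, a, c; rewrite ab' eq_sym bc eq_sym ac.
by exists a, b, c; rewrite ba' eq_sym ac eq_sym bc.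
Qed.

End LinearOrders.

Section WeightedAverages.
Variables (R : realType) (T : finType) (d f : T -> R).
Hypothesis d_dist : is_dist d.

Lemma dist_avg_lt c t0 :
  (forall t, f t <= c) -> 0 < d t0 -> f t0 < c -> \sum_t d t * f t < c.
Proof.
case: d_dist => d_ge0 d_sum1 f_le dt0 ft0.
have -> : c = \sum_t d t * c by rewrite -big_distrl /= d_sum1 mul1r.
rewrite -subr_gt0 -sumrB (bigD1 t0) //=.
have t0_gt0 : 0 < d t0 * c - d t0 * f t0 by rewrite -mulrBr mulr_gt0 ?subr_gt0.
have rest_ge0 : 0 <= \sum_(t | t != t0) (d t * c - d t * f t).
  by apply: sumr_ge0 => t _; rewrite -mulrBr mulr_ge0 ?subr_ge0.
lra.
Qed.

Lemma dist_avg_gt0 : (forall t, 0 < f t) -> 0 < \sum_t d t * f t.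
Proof.
case: d_dist => d_ge0 d_sum1 f_gt0.
have [t0 /andP[_ dt0]] : exists t0, true && (0 < d t0).
  by apply: psumr_neq0P => //; rewrite d_sum1; exact/eqP/oner_neq0.
rewrite (bigD1 t0) //=; apply: ltr_pwDl; first exact: mulr_gt0.
by apply: sumr_ge0 => t _; rewrite mulr_ge0 // ltW.
Qed.

End WeightedAverages.

Section PersistentCraving.
Variables (X : finType) (R : realType).
Variables (t : X -> linord X -> linord X -> R) (rhd : linord X).
Variables (nu : linord X -> R) (phi : X -> X -> R).
Hypothesis rep : persistent_craving_rep t rhd nu phi.
Implicit Types (o : linord X) (w x : X) (A : {set X}).

Lemma nu_ge0 o : 0 <= nu o.
Proof. by case: rep => [[[nu_ge0 _] _] _]. Qed.

Lemma nu_crave_gt0 w w' : w != w' -> 0 < nu (crave rhd w).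
Proof.
case: rep => [[_ [_ mono]] _] ww'; have cw := is_crave_crave rhd.
case/orP: (linord_total rhd ww') => [ww'_lt|w'w_lt].
  by case: (mono _ _ _ _ (cw w) (cw w') ww'_lt) => gt_nu /lt_trans; apply.
by case: (mono _ _ _ _ (cw w') (cw w) w'w_lt).
Qed.

Lemma nu_not_crave o : (forall w, o != crave rhd w) -> nu o = 0.
Proof.
case: rep => [[_ [supp _]] _] not_crave; apply/eqP/negPn/negP => /supp[w /is_craveE].
by apply/eqP; apply: not_crave.
Qed.

Lemma phi_ge0 M w : 0 <= phi M w.
Proof. by case: rep => [_ [/(_ M w) [/andP[]]]]. Qed.

Lemma phi_lt1 M w : phi M w < 1.
Proof. by case: rep => [_ [/(_ M w) [/andP[]]]]. Qed.

Lemma phi_gt0 M w : M != w -> 0 < phi M w.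
Proof. by case: rep => [_ [/(_ M w) [_ [_]]]]. Qed.

Lemma t_crave M w o' :
  t M (crave rhd w) o' = phi M w * (o' == crave rhd w)%:R + (1 - phi M w) * nu o'.
Proof. by case: rep => [_ [_ [t_cr _]]]; apply/t_cr/is_crave_crave. Qed.

Lemma t_not_crave M o o' : (forall w, o != crave rhd w) -> t M o o' = nu o'.
Proof. by case: rep => [_ [_ [_ t_nu0]]] /nu_not_crave nu0; apply: t_nu0. Qed.

Lemma t_crave_self w o' : t w (crave rhd w) o' = nu o'.
Proof.
case: rep => [_ [/(_ w w) [_ [phi_ww _]] _]].
by rewrite t_crave phi_ww mul0r add0r subr0 mul1r.
Qed.

Lemma t_le M o o' : o' != o -> t M o o' <= nu o'.
Proof.
case: (craveP rhd o) => [w -> o'w|/t_not_crave -> //].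
rewrite t_crave (negbTE o'w) mulr0 add0r ler_piMl ?nu_ge0 //.
by rewrite gerBl phi_ge0.
Qed.

Lemma t_crave_lt M w o' :
  M != w -> o' != crave rhd w -> 0 < nu o' -> t M (crave rhd w) o' < nu o'.
Proof.
move=> Mw o'w nu_gt0; rewrite t_crave (negbTE o'w) mulr0 add0r.
by rewrite gtr_pMl // gtrBl phi_gt0.
Qed.

Lemma t_gt0 M o o' : 0 < nu o' -> 0 < t M o o'.
Proof.
case: (craveP rhd o) => [w ->|/t_not_crave ->] // nu_gt0; rewrite t_crave.
apply: ltr_wpDl; first by rewrite mulr_ge0 ?phi_ge0 ?ler0n.
by rewrite mulr_gt0 // subr_gt0 phi_lt1.
Qed.

Lemma t_eq0 M o o' : (forall w, o' != crave rhd w) -> t M o o' = 0.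
Proof.
move=> o'_nc; case: (craveP rhd o) => [w ->|/t_not_crave ->]; last exact: nu_not_crave.
by rewrite t_crave (negbTE (o'_nc w)) nu_not_crave // !mulr0 addr0.
Qed.

Lemma mchain_crave_in A w o' : w \in A -> mchain t A (crave rhd w) o' = nu o'.
Proof. by move=> wA; rewrite /mchain Mel_crave // t_crave_self. Qed.

Lemma mchain_le A x o : x \in A -> mchain t A o (crave rhd x) <= nu (crave rhd x).
Proof.
move=> xA; have [->|ox] := eqVneq o (crave rhd x); first by rewrite mchain_crave_in.
by rewrite /mchain; case: Mel => [M|]; [apply: t_le; rewrite eq_sym | apply: nu_ge0].
Qed.

Lemma mchain_gt0 A o o' : A != set0 -> 0 < nu o' -> 0 < mchain t A o o'.
Proof. by move=> /(Mel_some o)[M MelM]; rewrite /mchain MelM; apply: t_gt0. Qed.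

Lemma mchain_eq0 A o o' : (forall w, o' != crave rhd w) -> mchain t A o o' = 0.
Proof. by move=> o'_nc; rewrite /mchain; case: Mel => // M; apply: t_eq0. Qed.

(* The item chosen from A under [≻_z], z outside A, is not z, so [≻_z] persists. *)
Lemma mchain_crave_notin_lt A x z :
  A != set0 -> z \notin A -> x != z ->
  mchain t A (crave rhd z) (crave rhd x) < nu (crave rhd x).
Proof.
move=> /(Mel_some (crave rhd z))[M MelM] zA xz; rewrite /mchain MelM.
have Mz : M != z by apply: contraNneq zA => <-; apply: Mel_in MelM.
by apply: t_crave_lt; rewrite ?(inj_eq (@crave_inj _ rhd)) ?(nu_crave_gt0 xz).
Qed.

Section Stationary.
Variables (A : {set X}) (nuA : linord X -> R).
Hypothesis stA : stationary t A nuA.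

Lemma stationary_not_crave o : (forall w, o != crave rhd w) -> nuA o = 0.
Proof.
case: stA => _ -> o_nc; rewrite big1 // => o' _.
by rewrite mchain_eq0 // mulr0.
Qed.

Lemma stationary_gt0 o : A != set0 -> 0 < nu o -> 0 < nuA o.
Proof.
case: stA => nuA_dist -> A0 nu_gt0.
by apply: dist_avg_gt0 => // o'; apply: mchain_gt0.
Qed.

Lemma stationary_crave_lt x z :
  x \in A -> z \notin A -> nuA (crave rhd x) < nu (crave rhd x).
Proof.
move=> xA zA; have A0 : A != set0 by apply/set0Pn; exists x.
have xz : x != z by apply: contraNneq zA => <-.
case: stA => nuA_dist ->; apply: (dist_avg_lt nuA_dist (t0 := crave rhd z)).
- by move=> o; apply: mchain_le.
- by apply: stationary_gt0 => //; apply: (nu_crave_gt0 (w' := x)); rewrite eq_sym.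
- exact: mchain_crave_notin_lt.
Qed.

Lemma stationary_crave_le_Nset x :
  nuA (crave rhd x) <= \sum_(o in Nset x A) nuA o.
Proof.
case: stA => [[nuA_ge0 _] _]; rewrite (bigD1 (crave rhd x)) ?crave_Nset //=.
by rewrite lerDl sumr_ge0.
Qed.

(* With some y in A above x in rhd, [≻_x] is the only craving order choosing x. *)
Lemma stationary_Nset_dominated x y :
  y \in A -> lt rhd y x -> \sum_(o in Nset x A) nuA o = nuA (crave rhd x).
Proof.
move=> yA yx; rewrite (bigD1 (crave rhd x)) ?crave_Nset //= big1 ?addr0 //.
move=> o /andP[+ ox]; case: (craveP rhd o) => [w oE|/stationary_not_crave //].
rewrite inE => /forall_inP/(_ y yA)/implyP; rewrite oE in ox *.
have yx' : y != x by apply: contraTneq yx => ->; rewrite linord_irr.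
by move=> /(_ yx')/lt_crave_inv/(_ yx) xw; rewrite xw eqxx in ox.
Qed.

End Stationary.

(* The choice from the whole of X is always the craved item, which never persists. *)
Lemma stationary_setT nuX : stationary t setT nuX -> nuX =1 nu.
Proof.
move=> stX o'; have [[_ nuX_sum1] ->] := stX.
rewrite -[nu o']mul1r -nuX_sum1 big_distrl; apply: eq_bigr => o _ /=.
case: (craveP rhd o) => [w ->|/(stationary_not_crave stX) ->].
  by rewrite mchain_crave_in ?inE.
by rewrite !mul0r.
Qed.

End PersistentCraving.

Theorem proposition1 (X : finType) (R : realType) (p : X -> {set X} -> R) :
  (2 < #|X|)%N ->
  random_choice_rule p ->
  consistent_PC p ->
  exists (x : X) (A B : {set X}), x \in A /\ A \subset B /\ p x A < p x B.
Proof.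
move=> X_gt2 _ [t [rhd [nu [phi [rep consistent]]]]].
have [x [y [z [yx zx zy]]]] := linord_triple rhd X_gt2.
pose A := [set x; y].
have zA : z \notin A by rewrite !inE negb_or zx zy.
have [|nuA [stA pA]] := consistent A; first by apply/set0Pn; exists x; apply: set21.
have [|nuX [stX pX]] := consistent setT; first by apply/set0Pn; exists x.
exists x, A, setT; split; first exact: set21.
split; first exact: subsetT.
rewrite pA ?set21 // pX ?in_setT // (stationary_Nset_dominated rep stA (set22 x y) yx).
apply: (lt_le_trans (y := nuX (crave rhd x))).
  by rewrite (stationary_setT rep stX); exact: (stationary_crave_lt rep stA (set21 x y) zA).
exact: stationary_crave_le_Nset stX x.
Qed.
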